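(* Consider the parallel-links routing game with homogeneous costs described in the context, with exactly $N=2$ users. Then $PoS=1$. Moreover, the NBS cost vector $\tilde{\mathbf g}$ is the cost vector $(J^1(\bar{\mathbf f}),J^2(\bar{\mathbf f}))$ of a single feasible routing profile $\bar{\mathbf f}$ whose link totals equal the system-optimal link flows, so that the NBS outcome is socially optimal with probability $1$.
   Context: Parallel-links routing game: users $\mathcal N=\{1,\dots,N\}$ share parallel links $\mathcal L=\{1,\dots,L\}$ joining a common source to a common destination; link $l$ has capacity $c_l$. User $i$ has demand $r^i>0$, $R=\sum_i r^i$, and $\sum_l c_l>R$. A routing strategy of user $i$ is $\mathbf f^i=(f^i_1,\dots,f^i_L)$ with $f^i_l\ge 0$ and $\sum_l f^i_l=r^i$; a feasible profile is $\mathbf f=(\mathbf f^1,\dots,\mathbf f^N)$ (set $\mathbf F$), and $f_l=\sum_i f^i_l$. Homogeneous costs: $J^i(\mathbf f)=\sum_{l} f^i_l T_l(f_l)$, where each $T_l:[0,\infty)\to[0,\infty)$ is strictly increasing, convex and continuously differentiable, and $T_l(f_l)=T(c_l-f_l)$ if $f_l<c_l$, $T_l(f_l)=\infty$ if $f_l\ge c_l$, for a single function $T$ not depending on the link, with $T(c_l-f_l)$ strictly increasing in $f_l$. NEP: a feasible $\hat{\mathbf f}$ such that each $\hat{\mathbf f}^i$ minimizes $J^i$ over user $i$'s feasible strategies given the others' strategies; it exists and is unique. $\hat J^i=J^i(\hat{\mathbf f})$, $\hat{\mathbf J}=(\hat J^i)_i$. Social cost $J_{sys}(\mathbf f)=\sum_iJ^i(\mathbf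 f)=\sum_l f_lT_l(f_l)$, depending only on link totals; $J^*_{sys}$ is its minimum over $\mathbf F$, attained at system-optimal link flows $(f^*_l)_l$. Bargaining: $\mathcal G$ is the set of all vectors $\sum_{m=1}^M p_m\,(J^1(\mathbf f(m)),\dots,J^N(\mathbf f(m)))$ with $M$ finite, $p_m>0$, $\sum_m p_m=1$, $\mathbf f(m)\in\mathbf F$. The NBS is the unique $\tilde{\mathbf g}$ maximizing $\prod_i(\hat J^i-g^i)$ over $\mathbf g\in\mathcal G$ with $g^i\le\hat J^i$ for all $i$. $PoS=\big(\sum_i\tilde g^i\big)/J^*_{sys}$. *)

From HB Require Import structures.
From mathcomp Require Import all_boot all_order all_algebra.
From mathcomp Require Import all_classical all_reals all_analysis.
Set Implicit Arguments. Unset Strict Implicit. Unset Printing Implicit Defensive.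
Import Order.TTheory GRing.Theory Num.Theory.
Import numFieldNormedType.Exports.
Local Open Scope classical_set_scope.
Local Open Scope ring_scope.

Section Game.
Variables (R : realType) (N L : nat).

(* a routing profile: f i l = flow of user i on link l *)
Definition profile := 'I_N -> 'I_L -> R.

Definition strategy_feasible (ri : R) (fi : 'I_L -> R) : Prop :=
  (forall l, 0 <= fi l) /\ \sum_(l < L) fi l = ri.

Definition feasible (r : 'I_N -> R) (f : profile) : Prop :=
  forall i, strategy_feasible (r i) (f i).

Definition flow (f : profile) (l : 'I_L) : R := \sum_(i < N) f i l.

Definition Tlink (c : 'I_L -> R) (T : R -> R) (l : 'I_L) (x : R) : \bar R :=
  if x < c l then (T (c l - x))%:E else +oo%E.

(* J^i(f) = sum_l f^i_l T_l(f_l)   (extended-real valued, 0 * +oo = 0) *)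
Definition J (c : 'I_L -> R) (T : R -> R) (f : profile) (i : 'I_N) : \bar R :=
  (\sum_(l < L) (f i l)%:E * Tlink c T l (flow f l))%E.

Definition Jsys (c : 'I_L -> R) (T : R -> R) (f : profile) : \bar R :=
  (\sum_(i < N) J c T f i)%E.

Definition upd (f : profile) (i : 'I_N) (g : 'I_L -> R) : profile :=
  fun j => if j == i then g else f j.

Definition is_NEP (c : 'I_L -> R) (T : R -> R) (r : 'I_N -> R) (fh : profile) : Prop :=
  feasible r fh /\
  forall i (g : 'I_L -> R), strategy_feasible (r i) g ->
    (J c T fh i <= J c T (upd fh i g) i)%E.

Definition in_G (c : 'I_L -> R) (T : R -> R) (r : 'I_N -> R) (g : 'I_N -> \bar R) : Prop :=
  exists (M : nat) (p : 'I_M -> R) (fs : 'I_M -> profile),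
    (forall m, 0 < p m) /\ \sum_(m < M) p m = 1 /\
    (forall m, feasible r (fs m)) /\
    g = fun i => (\sum_(m < M) (p m)%:E * J c T (fs m) i)%E.

Definition is_NBS (c : 'I_L -> R) (T : R -> R) (r : 'I_N -> R) (fh : profile)
    (gt : 'I_N -> \bar R) : Prop :=
  in_G c T r gt /\ (forall i, (gt i <= J c T fh i)%E) /\
  forall g, in_G c T r g -> (forall i, (g i <= J c T fh i)%E) ->
    (\prod_(i < N) (J c T fh i - g i) <= \prod_(i < N) (J c T fh i - gt i))%E.

Definition is_sysopt (c : 'I_L -> R) (T : R -> R) (r : 'I_N -> R) (fs : profile) : Prop :=
  feasible r fs /\ forall f, feasible r f -> (Jsys c T fs <= Jsys c T f)%E.

End Game.

Section LinkCost.
Variable R : realType.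

Definition convex_on (A : set R) (g : R -> R) : Prop :=
  forall x y t, A x -> A y -> 0 <= t <= 1 ->
    g (t * x + (1 - t) * y) <= t * g x + (1 - t) * g y.

(* continuously differentiable on A (one-sided at boundary points of A):
   there is a derivative d, continuous on A, with the difference quotients
   converging to d x within A *)
Definition C1_on (A : set R) (g : R -> R) : Prop :=
  exists d : R -> R, {within A, continuous d} /\
    forall x, A x ->
      (fun y => (g y - g x) / (y - x)) @ within (A `\ x) (nbhs x) --> d x.

Definition link_cost_ok (cl : R) (g : R -> R) : Prop :=
  let A := [set x | 0 <= x < cl] in
  (forall x, A x -> 0 <= g x) /\
  (forall x y, A x -> A y -> x < y -> g x < g y) /\
  convex_on A g /\ C1_on A g.

End LinkCost.

From mathcomp Require Import all_boot all_order all_algebra.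
From mathcomp Require Import all_classical all_reals all_analysis.
From mathcomp Require Import ring lra.
Import Order.TTheory GRing.Theory Num.Theory.
Set Implicit Arguments. Unset Strict Implicit. Unset Printing Implicit Defensive.
Local Open Scope ring_scope.

(* A user's equilibrium flow on a link never exceeds the optimal flow on that
   link.  Otherwise some other link m carries less than its optimal flow at the
   equilibrium, and by convexity of the link costs the equilibrium condition
   for moving a little of that user's flow from l to m contradicts the
   optimality condition for moving a little flow from m to l.  Hence user k may
   keep its equilibrium strategy while its partner routes the rest of the
   optimal link flows, and by the equilibrium condition the partner then pays
   at least its equilibrium cost.  Between the two such profiles the link flows
   stay optimal, so the user costs are affine along the segment and always add
   up to J*_sys; some point gives both users the same saving D/2, where D is the
   total equilibrium cost minus J*_sys.  Every point of the bargaining set costs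
   at least J*_sys in total, so its product of savings is at most (D/2)^2, with
   equality only for the savings (D/2, D/2): the NBS is that socially optimal
   point. *)

Lemma convex_on_increments (R : realType) (A : set R) (g : R -> R) u v h :
  convex_on A g -> A u -> A (v + h) -> u <= v -> 0 <= h ->
  g (u + h) - g u <= g (v + h) - g v.
Proof.
move=> cvx Au Avh uv h0.
have [d0|d_neq0] := eqVneq (v - u + h) 0.
  by rewrite (_ : v = u); lra.
have d_gt0 : 0 < v - u + h by lra.
pose s := h / (v - u + h).
have s01 : 0 <= s <= 1 by rewrite divr_ge0 ?ler_pdivrMr ?mul1r //=; lra.
have Eu : u + h = (1 - s) * u + (1 - (1 - s)) * (v + h) by rewrite /s; field.
have Ev : v = s * u + (1 - s) * (v + h) by rewrite /s; field.
have := cvx _ _ (1 - s) Au Avh; rewrite -Eu => /(_ ltac:(lra)).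
have := cvx _ _ s Au Avh; rewrite -Ev => /(_ s01).
nra.
Qed.

Lemma sumrB_two_points (V : zmodType) (I : finType) (a b : I -> V) (l m : I) :
  l != m -> (forall j, j != l -> j != m -> b j = a j) ->
  \sum_j b j - \sum_j a j = (b l - a l) + (b m - a m).
Proof.
move=> lm ab; rewrite (bigD1 l) // (bigD1 m) 1?eq_sym //=.
rewrite [in X in _ - X](bigD1 l) // [in X in _ - X](bigD1 m) 1?eq_sym //=.
rewrite (eq_bigr a) => [|j /andP[jl jm]]; last exact: ab.
by rewrite !opprD addrACA [X in _ + X = _]addrACA subrr addr0.
Qed.

Lemma exists_lt_of_sum_eq (R : realDomainType) (I : finType) (F G : I -> R) (l : I) :
  \sum_i F i = \sum_i G i -> G l < F l -> exists m, F m < G m.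
Proof.
move=> sFG GFl; apply/not_existsP => noFG; move: sFG; apply/eqP; rewrite gt_eqF //.
rewrite (bigD1 l) // [X in _ < X](bigD1 l) //=; apply: ltr_leD => //.
by apply: ler_sum => i _; rewrite leNgt; apply/negP => /noFG.
Qed.

Lemma convex_combination_between (R : realFieldType) (a b y : R) :
  a <= y <= b -> exists2 t, 0 <= t <= 1 & t * a + (1 - t) * b = y.
Proof.
move=> /andP[ay yb]; have [ab|ab] := eqVneq a b.
  by exists 0; [rewrite lexx ler01|lra].
have ab_gt0 : 0 < b - a by rewrite subr_gt0 lt_neqAle ab (le_trans ay yb).
exists ((b - y) / (b - a)); last by field; rewrite gt_eqF.
by rewrite divr_ge0 ?ler_pdivrMr ?mul1r /=; lra.
Qed.

Lemma budget_product_max (R : realFieldType) (u v D : R) :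
  0 <= u -> 0 <= v -> u + v <= D -> D / 2 * (D / 2) <= u * v -> u = D / 2.
Proof.
move=> u0 v0 uvD prod.
have : u <= D / 2 by nra.
have : D / 2 <= u by nra.
lra.
Qed.

Section LinkCost.
Variables (R : realType) (cl : R) (g : R -> R).
Hypothesis hg : link_cost_ok cl g.

Lemma link_cost_ge0 x : 0 <= x -> x < cl -> 0 <= g x.
Proof. by move=> x0 xc; apply: hg.1 => /=; lra. Qed.

Lemma link_cost_lt x y : 0 <= x -> x < y -> y < cl -> g x < g y.
Proof. by move=> x0 xy yc; apply: hg.2.1 => /=; lra. Qed.

Lemma link_cost_le x y : 0 <= x -> x <= y -> y < cl -> g x <= g y.
Proof.
move=> x0; rewrite le_eqVlt => /predU1P[-> //|xy yc].
exact/ltW/link_cost_lt.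
Qed.

Lemma link_cost_increments u v h : 0 <= u -> u <= v -> 0 <= h -> v + h < cl ->
  g (u + h) - g u <= g (v + h) - g v.
Proof. by move=> u0 uv h0 vhc; apply: (convex_on_increments hg.2.2.1) => //=; lra. Qed.

End LinkCost.

(* [x], [a] are a user's equilibrium flows on links [l], [m]; [Fhl], [Fhm] the
   equilibrium link flows; [Fl], [Fm] the optimal link flows. *)
Lemma exchange_improves (R : realType) (cl cm : R) (gl gm : R -> R)
    (x a Fhl Fhm Fl Fm e : R) :
  link_cost_ok cl gl -> link_cost_ok cm gm -> 0 < e ->
  0 <= Fl -> Fl + 2 * e < x -> x <= Fhl -> Fhl < cl ->
  0 <= a -> a <= Fhm -> Fhm + 2 * e <= Fm -> Fm < cm ->
  x * gl Fhl + a * gm Fhm <= (x - e) * gl (Fhl - e) + (a + e) * gm (Fhm + e) ->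
  (Fl + e) * gl (Fl + e) + (Fm - e) * gm (Fm - e) < Fl * gl Fl + Fm * gm Fm.
Proof.
move=> okl okm e0 Fl0 Flx xFhl Fhlc a0 aFhm FhmFm Fmc nash.
have incl : gl (Fl + e) - gl Fl <= gl (Fhl - e + e) - gl (Fhl - e).
  by apply: (link_cost_increments okl); lra.
have incm : gm (Fhm + e) - gm Fhm <= gm (Fm - e + e) - gm (Fm - e).
  by apply: (link_cost_increments okm); lra.
rewrite !subrK in incl incm.
have incl0 : 0 <= gl (Fl + e) - gl Fl.
  by rewrite subr_ge0; apply: (link_cost_le okl); lra.
have incm0 : 0 <= gm (Fhm + e) - gm Fhm.
  by rewrite subr_ge0; apply: (link_cost_le okm); lra.
have margl : Fl * (gl (Fl + e) - gl Fl) <= x * (gl Fhl - gl (Fhl - e)).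
  by apply: ler_pM => //; lra.
have margm : a * (gm (Fhm + e) - gm Fhm) <= Fm * (gm Fm - gm (Fm - e)).
  by apply: ler_pM => //; lra.
have ltl : e * gl (Fl + e) < e * gl (Fhl - e).
  by rewrite ltr_pM2l //; apply: (link_cost_lt okl); lra.
have lem : e * gm (Fhm + e) <= e * gm (Fm - e).
  by rewrite ler_pM2l //; apply: (link_cost_le okm); lra.
lra.
Qed.

Section Shift.
Variables (R : realType) (L : nat).

Definition shift (g : 'I_L -> R) (l m : 'I_L) (e : R) : 'I_L -> R :=
  fun j => g j - (if j == l then e else 0) + (if j == m then e else 0).

Lemma shift_other g l m e j : j != l -> j != m -> shift g l m e j = g j.
Proof. by move=> /negbTE jl /negbTE jm; rewrite /shift jl jm subr0 addr0. Qed.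

Lemma shift_from g l m e : l != m -> shift g l m e l = g l - e.
Proof. by move=> /negbTE lm; rewrite /shift eqxx lm addr0. Qed.

Lemma shift_to g l m e : l != m -> shift g l m e m = g m + e.
Proof. by rewrite eq_sym => /negbTE ml; rewrite /shift eqxx ml subr0. Qed.

Lemma sum_shift g l m e : \sum_j shift g l m e j = \sum_j g j.
Proof.
have sum_at (n : 'I_L) : \sum_j (if j == n then e else 0) = e.
  by rewrite -big_mkcond big_pred1_eq.
by rewrite /shift big_split sumrB /= !sum_at subrK.
Qed.

Lemma strategy_feasible_shift ri g l m e : strategy_feasible ri g ->
  0 <= e <= g l -> strategy_feasible ri (shift g l m e).
Proof.
move=> [g0 sg] /andP[e0 egl]; split; last by rewrite sum_shift.
move=> j; rewrite /shift; have := g0 j.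
by case: eqP => [->|_]; case: eqP => _; lra.
Qed.

End Shift.

Section Game.
Variables (R : realType) (N L : nat) (c : 'I_L -> R) (T : R -> R) (r : 'I_N -> R).
Hypothesis hT : forall l, link_cost_ok (c l) (fun x => T (c l - x)).
Implicit Types (f : profile R N L) (g : 'I_L -> R).

Definition below_capacity f := forall l, flow f l < c l.

Definition cost f (i : 'I_N) : R := \sum_(l < L) f i l * T (c l - flow f l).

Definition sys_cost (F : 'I_L -> R) : R := \sum_(l < L) F l * T (c l - F l).

Lemma flow_ge0 f l : feasible r f -> 0 <= flow f l.
Proof. by move=> hf; apply: sumr_ge0 => i _; apply: (hf i).1. Qed.

Lemma strategy_le_flow f k l : feasible r f -> f k l <= flow f l.
Proof.
move=> hf; rewrite /flow (bigD1 k) //= lerDl.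
by apply: sumr_ge0 => i _; apply: (hf i).1.
Qed.

Lemma sum_flow f : feasible r f -> \sum_(l < L) flow f l = \sum_(i < N) r i.
Proof. by move=> hf; rewrite exchange_big; apply: eq_bigr => i _; apply: (hf i).2. Qed.

Lemma sum_cost f : \sum_(i < N) cost f i = sys_cost (flow f).
Proof. by rewrite exchange_big; apply: eq_bigr => l _; rewrite -mulr_suml. Qed.

Lemma J_below_capacity f i : below_capacity f -> J c T f i = (cost f i)%:E.
Proof. by move=> cap; rewrite /J -sumEFin; apply: eq_bigr => l _; rewrite /Tlink cap. Qed.

Lemma Jsys_below_capacity f : below_capacity f -> Jsys c T f = (sys_cost (flow f))%:E.
Proof.
move=> cap; rewrite /Jsys -sum_cost -sumEFin.
by apply: eq_bigr => i _; apply: J_below_capacity.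
Qed.

Lemma J_term_ge0 f i l : feasible r f -> (0 <= (f i l)%:E * Tlink c T l (flow f l))%E.
Proof.
move=> hf; apply: mule_ge0; first by rewrite lee_fin; apply: (hf i).1.
rewrite /Tlink; case: ifP => // fc; rewrite lee_fin.
by apply: (link_cost_ge0 (hT l)) => //; apply: flow_ge0.
Qed.

Lemma J_ge0 f i : feasible r f -> (0 <= J c T f i)%E.
Proof. by move=> hf; apply: sume_ge0 => l _; apply: J_term_ge0. Qed.

(* The positivity of [f i l] matters: [J] evaluates [0 * +oo] to [0]. *)
Lemma J_overload f i l : feasible r f -> 0 < f i l -> c l <= flow f l ->
  J c T f i = +oo%E.
Proof.
move=> hf fil cl_le; apply/eqP; rewrite -leye_eq /J (bigD1 l) //=.
have -> : ((f i l)%:E * Tlink c T l (flow f l) = +oo)%E.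
  by rewrite /Tlink ltNge cl_le /= gt0_muley ?lte_fin.
by apply: leeDl; apply: sume_ge0 => l' _; apply: J_term_ge0.
Qed.

Lemma below_capacity_of_J_finite f : (forall l, 0 < c l) -> feasible r f ->
  (forall i, (J c T f i < +oo)%E) -> below_capacity f.
Proof.
move=> hc hf J_fin l; rewrite ltNge; apply/negP => cl_le.
have [i /andP[_ fil]] : exists i, predT i && (0 < f i l).
  apply: psumr_neq0P => [i _|]; first exact: (hf i).1.
  by apply/eqP; apply: lt0r_neq0; apply: lt_le_trans (hc l) cl_le.
by move: (J_fin i); rewrite (J_overload hf fil cl_le) ltxx.
Qed.

Lemma upd_same f k g : upd f k g k = g.
Proof. by rewrite /upd eqxx. Qed.

Lemma flow_upd f k g l : flow (upd f k g) l = g l + (flow f l - f k l).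
Proof.
have split_k (h : profile R N L) : flow h l = h k l + \sum_(i < N | i != k) h i l.
  by rewrite /flow (bigD1 k).
rewrite !split_k upd_same addrAC subrr add0r; congr (_ + _).
by apply: eq_bigr => i /negbTE ik; rewrite /upd ik.
Qed.

Lemma flow_upd_shift f k l m e :
  flow (upd f k (shift (f k) l m e)) = shift (flow f) l m e.
Proof. by apply/funext => j; rewrite flow_upd /shift; ring. Qed.

Lemma feasible_upd f k g : feasible r f -> strategy_feasible (r k) g ->
  feasible r (upd f k g).
Proof. by move=> hf hg i; rewrite /upd; case: eqP => [-> //|_]; apply: hf. Qed.

Lemma sys_cost_gt0 F : (forall l, 0 <= F l < c l) -> 0 < \sum_(l < L) F l ->
  0 < sys_cost F.
Proof.
move=> hF sF; have F0 l : 0 <= F l by have /andP[] := hF l.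
have [l /andP[_ Fl]] : exists l, predT l && (0 < F l).
  by apply: psumr_neq0P => [l _|]; [exact: F0|apply/eqP; rewrite gt_eqF].
have /andP[_ Flc] := hF l.
have T_gt0 : 0 < T (c l - F l).
  apply: le_lt_trans _ (link_cost_lt (hT l) (lexx 0) Fl Flc).
  by apply: (link_cost_ge0 (hT l)) => //; apply: lt_trans Flc.
rewrite /sys_cost (bigD1 l) //= ltr_pwDl ?mulr_gt0 //.
apply: sumr_ge0 => j _; apply: mulr_ge0 (F0 j) _.
by have /andP[] := hF j; apply: (link_cost_ge0 (hT j)).
Qed.

Lemma in_G_profile f : feasible r f -> in_G c T r (J c T f).
Proof.
move=> hf; exists 1%N, (fun _ => 1), (fun _ => f).
split; first by move=> _; apply: ltr01.
split; first by rewrite big_ord1.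
by split=> //; apply/funext => i; rewrite big_ord1 mul1e.
Qed.

Definition mix (t : R) f1 f2 : profile R N L :=
  fun i l => t * f1 i l + (1 - t) * f2 i l.

Lemma flow_mix t f1 f2 l : flow (mix t f1 f2) l = t * flow f1 l + (1 - t) * flow f2 l.
Proof. by rewrite /flow big_split /= -!mulr_sumr. Qed.

Lemma feasible_mix t f1 f2 : 0 <= t <= 1 -> feasible r f1 -> feasible r f2 ->
  feasible r (mix t f1 f2).
Proof.
move=> /andP[t0 t1] hf1 hf2 i; split.
  move=> l; apply: addr_ge0; apply: mulr_ge0; rewrite ?subr_ge0 //.
    exact: (hf1 i).1.
  exact: (hf2 i).1.
by rewrite big_split /= -!mulr_sumr (hf1 i).2 (hf2 i).2; ring.
Qed.

Lemma cost_mix t f1 f2 i : flow f1 = flow f2 ->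
  cost (mix t f1 f2) i = t * cost f1 i + (1 - t) * cost f2 i.
Proof.
move=> same_flow; have flowE : flow (mix t f1 f2) = flow f1.
  by apply/funext => l; rewrite flow_mix same_flow; ring.
rewrite /cost flowE same_flow !mulr_sumr -big_split /=.
by apply: eq_bigr => l _; rewrite /mix; ring.
Qed.

End Game.

Section Equilibrium.
Variables (R : realType) (N L : nat) (c : 'I_L -> R) (T : R -> R) (r : 'I_N -> R).
Hypothesis hc : forall l, 0 < c l.
Hypothesis hr : forall i, 0 < r i.
Hypothesis hcap : \sum_(i < N) r i < \sum_(l < L) c l.
Hypothesis hT : forall l, link_cost_ok (c l) (fun x => T (c l - x)).
Variables fh fs : profile R N L.
Hypothesis hNE : is_NEP c T r fh.
Hypothesis hopt : is_sysopt c T r fs.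
Implicit Types (f : profile R N L) (g : 'I_L -> R).

(* User [k] could split its demand in proportion to the capacity left free by
   the others, which overloads no link. *)
Lemma NEP_J_finite k : (J c T fh k < +oo)%E.
Proof.
have [hf nash] := hNE.
pose res l := Num.max (c l - (flow fh l - fh k l)) 0.
pose S := \sum_l res l.
have rk_lt : r k < S.
  have res_ge : \sum_l (c l - (flow fh l - fh k l)) <= S.
    by apply: ler_sum => l _; rewrite le_max lexx.
  apply: lt_le_trans res_ge.
  rewrite !sumrB (sum_flow hf) (hf k).2.
  by move: hcap; rewrite (bigD1 k) //=; have := hr k; lra.
have S_gt0 : 0 < S by apply: lt_trans (hr k) rk_lt.
pose g l := r k / S * res l.
have hg : strategy_feasible (r k) g.
  split; last by rewrite -mulr_sumr mulfVK // lt0r_neq0.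
  move=> l; apply: mulr_ge0; last by rewrite le_max lexx orbT.
  by apply: divr_ge0; exact: ltW.
apply: le_lt_trans (nash k g hg) _; apply: lte_sum_pinfty => l _.
rewrite /Tlink upd_same flow_upd; case: ifP => [_|]; first by rewrite -EFinM ltry.
rewrite /g /res; case: (lerP (c l - (flow fh l - fh k l)) 0) => [_|res_gt0].
  by rewrite mulr0 mul0e ltry.
have : r k / S * (c l - (flow fh l - fh k l)) < c l - (flow fh l - fh k l).
  by rewrite gtr_pMl // ltr_pdivrMr // mul1r.
by move=> lt_res /negbT; rewrite -leNgt => overload; exfalso; lra.
Qed.

Lemma NEP_below_capacity : below_capacity c fh.
Proof. exact (below_capacity_of_J_finite hT hc hNE.1 NEP_J_finite). Qed.

Lemma sysopt_below_capacity : below_capacity c fs.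
Proof.
have Jsys_fin : (Jsys c T fs < +oo)%E.
  apply: le_lt_trans (hopt.2 _ hNE.1) _.
  by apply: lte_sum_pinfty => i _; apply: NEP_J_finite.
have J_fin k : (J c T fs k < +oo)%E.
  apply: le_lt_trans Jsys_fin; rewrite /Jsys (bigD1 k) //= leeDl //.
  by apply: sume_ge0 => i _; apply: (J_ge0 hT); exact: hopt.1.
exact (below_capacity_of_J_finite hT hc hopt.1 J_fin).
Qed.

Lemma NEP_cost_le_upd k g : strategy_feasible (r k) g -> below_capacity c (upd fh k g) ->
  cost c T fh k <= cost c T (upd fh k g) k.
Proof.
move=> hg cap; have := hNE.2 k g hg.
by rewrite (J_below_capacity T k NEP_below_capacity) (J_below_capacity T k cap) lee_fin.
Qed.

Lemma sysopt_cost_le f : feasible r f -> below_capacity c f ->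
  sys_cost c T (flow fs) <= sys_cost c T (flow f).
Proof.
move=> hf cap; have := hopt.2 f hf.
by rewrite (Jsys_below_capacity T sysopt_below_capacity) (Jsys_below_capacity T cap) lee_fin.
Qed.

Lemma NEP_shift k l m e : l != m -> 0 <= e <= fh k l -> flow fh m + e < c m ->
  fh k l * T (c l - flow fh l) + fh k m * T (c m - flow fh m) <=
  (fh k l - e) * T (c l - (flow fh l - e)) + (fh k m + e) * T (c m - (flow fh m + e)).
Proof.
move=> lm he capm; set g := shift (fh k) l m e.
have flowE := flow_upd_shift fh k l m e.
have cap : below_capacity c (upd fh k g).
  move=> j; rewrite flowE; case: (eqVneq j l) => [->|jl].
    by rewrite shift_from //; have := NEP_below_capacity l; move: he => /andP[]; lra.
  case: (eqVneq j m) => [->|jm]; first by rewrite shift_to.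
  by rewrite shift_other //; apply: NEP_below_capacity.
have := NEP_cost_le_upd (strategy_feasible_shift m (hNE.1 k) he) cap.
rewrite -subr_ge0 /cost (sumrB_two_points lm) => [|j jl jm]; last first.
  by rewrite upd_same flowE !shift_other.
by rewrite upd_same flowE !shift_from // !shift_to //; lra.
Qed.

Lemma sysopt_shift i l m e : l != m -> 0 <= e <= fs i m -> flow fs l + e < c l ->
  flow fs l * T (c l - flow fs l) + flow fs m * T (c m - flow fs m) <=
  (flow fs l + e) * T (c l - (flow fs l + e)) + (flow fs m - e) * T (c m - (flow fs m - e)).
Proof.
move=> lm he capl; have ml : m != l by rewrite eq_sym.
set f := upd fs i (shift (fs i) m l e).
have flowE : flow f = shift (flow fs) m l e by apply: flow_upd_shift.
have cap : below_capacity c f.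
  move=> j; rewrite flowE; case: (eqVneq j l) => [->|jl]; first by rewrite shift_to.
  case: (eqVneq j m) => [->|jm].
    by rewrite shift_from //; have := sysopt_below_capacity m; move: he => /andP[]; lra.
  by rewrite shift_other //; apply: sysopt_below_capacity.
have := sysopt_cost_le (feasible_upd hopt.1 (strategy_feasible_shift l (hopt.1 i) he)) cap.
rewrite -subr_ge0 /sys_cost flowE (sumrB_two_points lm) => [|j jl jm]; last first.
  by rewrite !shift_other.
by rewrite shift_to // shift_from //; lra.
Qed.

Lemma NEP_strategy_le_sysopt_flow k l : fh k l <= flow fs l.
Proof.
rewrite leNgt; apply/negP => Fl_lt.
have x_le := strategy_le_flow k l hNE.1.
have [m Fhm_lt] : exists m, flow fh m < flow fs m.
  apply: (exists_lt_of_sum_eq (l := l)); last lra.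
  by rewrite (sum_flow hNE.1) (sum_flow hopt.1).
have lm : l != m by apply/eqP => lm; subst m; lra.
have [i /andP[_ fsim]] : exists i, predT i && (0 < fs i m).
  apply: psumr_neq0P => [i _|]; first exact: (hopt.1 i).1.
  apply/eqP; apply: lt0r_neq0; apply: le_lt_trans Fhm_lt.
  exact: flow_ge0 hNE.1.
pose e := Num.min (Num.min ((fh k l - flow fs l) / 3) ((flow fs m - flow fh m) / 2)) (fs i m).
have e_gt0 : 0 < e.
  by rewrite !lt_min fsim andbT; apply/andP; split; apply: divr_gt0; lra.
have e1 : e <= (fh k l - flow fs l) / 3 by rewrite !ge_min lexx.
have e2 : e <= (flow fs m - flow fh m) / 2 by rewrite !ge_min lexx orbT.
have e3 : e <= fs i m by rewrite ge_min lexx orbT.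
have Fl_ge0 := flow_ge0 l hopt.1.
have Fhm_ge0 := flow_ge0 m hNE.1.
have e_nash : 0 <= e <= fh k l by apply/andP; split; lra.
have e_opt : 0 <= e <= fs i m by apply/andP; split; lra.
have cap_l := NEP_below_capacity l.
have cap_m := sysopt_below_capacity m.
have nash := NEP_shift lm e_nash ltac:(lra).
have := sysopt_shift lm e_opt ltac:(lra); apply/negP; rewrite -ltNge.
apply: (exchange_improves (hT l) (hT m) e_gt0 Fl_ge0 _ x_le cap_l
  ((hNE.1 k).1 m) (strategy_le_flow k m hNE.1) _ cap_m nash); lra.
Qed.

Lemma in_G_finite_bound (g : 'I_N -> \bar R) : in_G c T r g ->
  (forall i, (g i < +oo)%E) ->
  exists y : 'I_N -> R,
    g = (fun i => (y i)%:E) /\ sys_cost c T (flow fs) <= \sum_(i < N) y i.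
Proof.
move=> [M [p [fm [p_gt0 [p_sum [fm_feas ->]]]]]] g_fin.
have cap m : below_capacity c (fm m).
  apply: (below_capacity_of_J_finite hT hc (fm_feas m)) => i.
  have : ((p m)%:E * J c T (fm m) i < +oo)%E.
    apply: le_lt_trans (g_fin i); rewrite (bigD1 m) //= leeDl //.
    apply: sume_ge0 => m' _; apply: mule_ge0; first by rewrite lee_fin ltW.
    by apply: (J_ge0 hT); apply: fm_feas.
  rewrite !ltey; apply: contra_neq => ->.
  by rewrite gt0_muley // lte_fin.
exists (fun i => \sum_(m < M) p m * cost c T (fm m) i); split.
  apply/funext => i; rewrite -sumEFin; apply: eq_bigr => m _.
  by rewrite (J_below_capacity T i (cap m)) EFinM.
rewrite exchange_big /= -[X in X <= _]mul1r -p_sum mulr_suml.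
apply: ler_sum => m _; rewrite -mulr_sumr sum_cost.
apply: ler_wpM2l; first exact: ltW.
exact: sysopt_cost_le (fm_feas m) (cap m).
Qed.

End Equilibrium.

Lemma sum_ord2 (V : nmodType) (F : 'I_2 -> V) : \sum_(i < 2) F i = F ord0 + F ord_max.
Proof. by rewrite big_ord_recr big_ord1; congr (F _ + F _); apply: val_inj. Qed.

Lemma eprod_ord2 (R : realDomainType) (F : 'I_2 -> \bar R) :
  (\prod_(i < 2) F i = F ord0 * F ord_max)%E.
Proof. by rewrite big_ord_recr big_ord1; congr (F _ * F _)%E; apply: val_inj. Qed.

Lemma ord2P (i : 'I_2) : i = ord0 \/ i = ord_max.
Proof. by case: i => [[|[|//]]] ?; [left|right]; apply: val_inj. Qed.

Definition partner (k : 'I_2) : 'I_2 := if k == ord0 then ord_max else ord0.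

Lemma partnerK k : partner (partner k) = k.
Proof. by case: (ord2P k) => ->. Qed.

Lemma ord2_partnerP k i : i = k \/ i = partner k.
Proof. by case: (ord2P k) => ->; case: (ord2P i) => ->; auto. Qed.

Lemma sum_ord2_partner (V : nmodType) (F : 'I_2 -> V) k :
  \sum_(i < 2) F i = F k + F (partner k).
Proof. by rewrite sum_ord2; case: (ord2P k) => -> //; rewrite addrC. Qed.

Section TwoUsers.
Variables (R : realType) (L : nat) (c : 'I_L -> R) (T : R -> R) (r : 'I_2 -> R).
Hypothesis hc : forall l, 0 < c l.
Hypothesis hr : forall i, 0 < r i.
Hypothesis hcap : \sum_(i < 2) r i < \sum_(l < L) c l.
Hypothesis hT : forall l, link_cost_ok (c l) (fun x => T (c l - x)).
Variables fh fs : profile R 2 L.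
Hypothesis hNE : is_NEP c T r fh.
Hypothesis hopt : is_sysopt c T r fs.

Let fh_cap := NEP_below_capacity hc hr hcap hT hNE.
Let fs_cap := sysopt_below_capacity hc hr hcap hT hNE hopt.

Definition NEP_surplus : R := \sum_(i < 2) cost c T fh i - sys_cost c T (flow fs).

Lemma NEP_surplusE k :
  NEP_surplus = cost c T fh k + cost c T fh (partner k) - sys_cost c T (flow fs).
Proof. by rewrite /NEP_surplus (sum_ord2_partner (fun i => cost c T fh i) k). Qed.

Lemma NEP_surplus_ge0 : 0 <= NEP_surplus.
Proof.
rewrite subr_ge0 sum_cost.
exact (sysopt_cost_le hc hr hcap hT hNE hopt hNE.1 fh_cap).
Qed.

Lemma sum_cost_partner (f : profile R 2 L) k :
  cost c T f k + cost c T f (partner k) = sys_cost c T (flow f).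
Proof. by rewrite -sum_cost (sum_ord2_partner (fun i => cost c T f i) k). Qed.

Definition opt_completion k : profile R 2 L :=
  upd fh (partner k) (fun l => flow fs l - fh k l).

Lemma flow_opt_completion k : flow (opt_completion k) = flow fs.
Proof.
apply/funext => l; rewrite flow_upd /flow (sum_ord2_partner (fun i => fh i l) k).
by rewrite addrK subrK.
Qed.

Lemma feasible_opt_completion k : feasible r (opt_completion k).
Proof.
apply: feasible_upd hNE.1 _; split.
  move=> l; rewrite subr_ge0.
  exact (NEP_strategy_le_sysopt_flow hc hr hcap hT hNE hopt k l).
by rewrite sumrB (sum_flow hopt.1) (hNE.1 k).2 (sum_ord2_partner r k) addrAC subrr add0r.
Qed.

Lemma NEP_cost_le_opt_completion k :
  cost c T fh k <= cost c T (opt_completion (partner k)) k.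
Proof.
have dev : opt_completion (partner k) = upd fh k (fun l => flow fs l - fh (partner k) l).
  by rewrite /opt_completion partnerK.
rewrite dev; apply: (NEP_cost_le_upd hc hr hcap hT hNE).
  by have := feasible_opt_completion (partner k) k; rewrite dev upd_same.
by rewrite -dev => l; rewrite flow_opt_completion; apply: fs_cap.
Qed.

Lemma opt_completion_cost_le k :
  cost c T (opt_completion k) k <= cost c T fh k - NEP_surplus.
Proof.
have := NEP_cost_le_opt_completion (partner k); rewrite partnerK.
have := sum_cost_partner (opt_completion k) k.
by rewrite flow_opt_completion (NEP_surplusE k) => sum_opt nash; lra.
Qed.

Lemma fair_split : exists2 fb : profile R 2 L, feasible r fb /\ flow fb = flow fs &
  forall i, cost c T fb i = cost c T fh i - NEP_surplus / 2.
Proof.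
pose k : 'I_2 := ord0.
pose f1 := opt_completion k; pose f2 := opt_completion (partner k).
have [t t01 tE] : exists2 t, 0 <= t <= 1 &
    t * cost c T f1 k + (1 - t) * cost c T f2 k = cost c T fh k - NEP_surplus / 2.
  apply: convex_combination_between.
  have := opt_completion_cost_le k; have := NEP_cost_le_opt_completion k.
  by have := NEP_surplus_ge0; move=> D0 own_le own_ge; apply/andP; split; lra.
have same_flow : flow f1 = flow f2 by rewrite !flow_opt_completion.
pose fb := mix t f1 f2.
have fb_flow : flow fb = flow fs.
  by apply/funext => l; rewrite flow_mix same_flow flow_opt_completion; ring.
have fb_cost : cost c T fb k = cost c T fh k - NEP_surplus / 2 by rewrite cost_mix.
exists fb; first by split=> //; apply: feasible_mix => //; apply: feasible_opt_completion.
move=> i; case: (ord2_partnerP k i) => -> //.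
have := sum_cost_partner fb k.
by rewrite fb_flow fb_cost (NEP_surplusE k) => sum_fb; lra.
Qed.

Lemma sum_fair_split :
  \sum_(i < 2) (cost c T fh i - NEP_surplus / 2) = sys_cost c T (flow fs).
Proof. by rewrite /NEP_surplus !sum_ord2; lra. Qed.

Lemma NBS_fair_split gt : is_NBS c T r fh gt ->
  gt = fun i => (cost c T fh i - NEP_surplus / 2)%:E.
Proof.
move=> [gt_G [gt_le gt_max]].
have Jfh i : J c T fh i = (cost c T fh i)%:E := J_below_capacity T i fh_cap.
have [y [gtE y_sum]] : exists y : 'I_2 -> R,
    gt = (fun i => (y i)%:E) /\ sys_cost c T (flow fs) <= \sum_(i < 2) y i.
  apply: (in_G_finite_bound hc hr hcap hT hNE hopt gt_G) => i.
  by apply: le_lt_trans (gt_le i) _; rewrite Jfh ltry.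
have y_le i : y i <= cost c T fh i by have := gt_le i; rewrite gtE Jfh lee_fin.
have [fb [fb_feas fb_flow] fb_cost] := fair_split.
have fb_cap : below_capacity c fb by move=> l; rewrite fb_flow; apply: fs_cap.
have Jfb i : J c T fb i = (cost c T fh i - NEP_surplus / 2)%:E.
  by rewrite (J_below_capacity T i fb_cap) fb_cost.
have fb_le i : (J c T fb i <= J c T fh i)%E.
  by rewrite Jfb Jfh lee_fin; have := NEP_surplus_ge0; lra.
have := gt_max _ (in_G_profile c T fb_feas) fb_le.
rewrite !eprod_ord2 gtE !Jfb !Jfh -!EFinB -!EFinM lee_fin.
have half a : a - (a - NEP_surplus / 2) = NEP_surplus / 2.
  by rewrite opprB addrC subrK.
rewrite !half => half_sq.
have surplusE : NEP_surplus =
    cost c T fh ord0 + cost c T fh ord_max - sys_cost c T (flow fs) := NEP_surplusE ord0.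
rewrite sum_ord2 in y_sum.
have u_eq : cost c T fh ord0 - y ord0 = NEP_surplus / 2.
  apply: (budget_product_max (v := cost c T fh ord_max - y ord_max)) half_sq.
  - by rewrite subr_ge0 y_le.
  - by rewrite subr_ge0 y_le.
  - lra.
have v_eq : cost c T fh ord_max - y ord_max = NEP_surplus / 2.
  apply: (budget_product_max (v := cost c T fh ord0 - y ord0)).
  - by rewrite subr_ge0 y_le.
  - by rewrite subr_ge0 y_le.
  - lra.
  - by rewrite [X in _ <= X]mulrC.
by apply/funext => i; congr EFin; case: (ord2P i) => ->; lra.
Qed.

End TwoUsers.

Theorem theorem3p2 (R : realType) (L : nat) (c : 'I_L -> R) (T : R -> R)
    (r : 'I_2 -> R)
    (hc : forall l, 0 < c l)
    (hr : forall i, 0 < r i)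
    (hcap : \sum_(i < 2) r i < \sum_(l < L) c l)
    (hT : forall l, link_cost_ok (c l) (fun x => T (c l - x)))
    (fh : profile R 2 L) (hNE : is_NEP c T r fh)
    (gt : 'I_2 -> \bar R) (hNBS : is_NBS c T r fh gt)
    (fs : profile R 2 L) (hopt : is_sysopt c T r fs) :
  ((\sum_(i < 2) gt i) * (Jsys c T fs)^-1 = 1)%E /\
  exists fb : profile R 2 L,
    feasible r fb /\ (forall l, flow fb l = flow fs l) /\
    gt = fun i => J c T fb i.
Proof.
have fs_cap := sysopt_below_capacity hc hr hcap hT hNE hopt.
have gtE := NBS_fair_split hc hr hcap hT hNE hopt hNBS.
have [fb [fb_feas fb_flow] fb_cost] := fair_split hc hr hcap hT hNE hopt.
have opt_gt0 : 0 < sys_cost c T (flow fs).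
  apply: (sys_cost_gt0 hT) => [l|].
    by rewrite fs_cap andbT; apply: flow_ge0 hopt.1.
  by rewrite (sum_flow hopt.1) sum_ord2; apply: addr_gt0.
split.
  rewrite gtE sumEFin sum_fair_split (Jsys_below_capacity T fs_cap).
  by rewrite divee // gt_eqF // lte_fin.
exists fb; split=> //; split=> [l|]; first by rewrite fb_flow.
have fb_cap : below_capacity c fb by move=> l; rewrite fb_flow; apply: fs_cap.
by rewrite gtE; apply/funext => i; rewrite (J_below_capacity T i fb_cap) fb_cost.
Qed.
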